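(* Fix $1<p<\infty$. Let $X$ and $Y$ be Banach spaces such that $X$ has the approximation property and $\mathcal A(X,Y)\subsetneq\mathcal K(X,Y)$, and suppose there is a linear isomorphism $V:X\to X\oplus X$. Let $Z_p:=\big(\bigoplus_{j=0}^\infty X_j\big)_{\ell^p}$ with $X_0=Y$ and $X_j=X$ for $j\ge1$, and for $\emptyset\neq A\subsetneq\mathbb N$ let \[ \mathcal I_A:=\{S\in\mathcal K(Z_p): P_0SJ_0\in\mathcal A(Y),\ P_0SJ_k\in\mathcal A(X,Y)\text{ for all }k\in A\}. \] Write $[r]=\{1,\ldots,r\}$ and $[r]^c=\mathbb N\setminus[r]$. Then for all $r,s\in\mathbb N$: (a) $\mathcal I_{[r]}$ and $\mathcal I_{[s]}$ are isomorphic as Banach algebras; (b) $\mathcal I_{[r]^c}$ and $\mathcal I_{[s]^c}$ are isomorphic as Banach algebras.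
   Context: $\mathbb N=\{1,2,3,\ldots\}$. For Banach spaces $E,F$, $\mathcal K(E,F)$ denotes the compact operators and $\mathcal A(E,F)$ the operator-norm closure of the finite-rank operators $E\to F$; $\mathcal A(E)=\mathcal A(E,E)$. $P_m:Z_p\to X_m$ and $J_n:X_n\to Z_p$ ($m,n\ge0$) are the natural coordinate projections and inclusions. *)

From mathcomp Require Import all_boot all_order all_algebra.
From mathcomp Require Import all_classical all_reals all_analysis.
Set Implicit Arguments. Unset Strict Implicit. Unset Printing Implicit Defensive.
Import Order.TTheory GRing.Theory Num.Theory.
Import numFieldNormedType.Exports.
Local Open Scope classical_set_scope.
Local Open Scope ring_scope.

Definition is_linear (R : realType) (E F : normedModType R) (T : E -> F) :=
  forall (a : R) (u v : E), T (a *: u + v) = a *: T u + T v.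

Definition bdd_op (R : realType) (E F : normedModType R) (T : E -> F) :=
  is_linear T /\ continuous T.

Definition finite_rank (R : realType) (E F : normedModType R) (T : E -> F) :=
  exists (n : nat) (e : 'I_n -> F),
    forall x, exists c : 'I_n -> R, T x = \sum_(i < n) c i *: e i.

Definition in_A (R : realType) (E F : normedModType R) (T : E -> F) :=
  bdd_op T /\
  forall eps : R, 0 < eps -> exists F0 : E -> F,
    bdd_op F0 /\ finite_rank F0 /\ forall x, `|T x - F0 x| <= eps * `|x|.

Definition in_K (R : realType) (E F : normedModType R) (T : E -> F) :=
  bdd_op T /\ compact (closure (T @` closed_ball (0 : E) 1)).

Definition approx_prop (R : realType) (E : normedModType R) :=
  forall K : set E, compact K -> forall eps : R, 0 < eps ->
    exists T : E -> E, bdd_op T /\ finite_rank T /\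
      forall x, K x -> `|T x - x| < eps.

(* ambient space: a point (y, x) represents the sequence (y, x 0, x 1, ...),
   i.e. coordinate j >= 1 of Z_p (in X_j = X) is x (j-1). *)
Definition seqE (R : realType) (X Y : normedModType R) :=
  (Y * (nat -> X))%type.

Definition lpsum (R : realType) (X Y : normedModType R) (p : R)
    (z : seqE X Y) : \bar R :=
  ((`|z.1| `^ p)%:E + \sum_(k <oo) (`|z.2 k| `^ p)%:E)%E.

Definition inZ (R : realType) (X Y : normedModType R) (p : R) :
  pred (seqE X Y) := fun z => (lpsum p z < +oo)%E.

Definition Zp (R : realType) (X Y : normedModType R) (p : R) :=
  {z : seqE X Y | inZ p z}.

Definition znorm (R : realType) (X Y : normedModType R) (p : R)
    (z : Zp X Y p) : R :=
  fine (lpsum p (val z)) `^ p^-1.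

Definition zdist (R : realType) (X Y : normedModType R) (p : R)
    (z w : Zp X Y p) : R :=
  fine (lpsum p (val z - val w)) `^ p^-1.

Definition zop (R : realType) (X Y : normedModType R) (p : R) :=
  Zp X Y p -> Zp X Y p.

Definition zlinear (R : realType) (X Y : normedModType R) (p : R)
    (S : zop X Y p) :=
  (forall z1 z2 z3 : Zp X Y p, val z3 = val z1 + val z2 ->
      val (S z3) = val (S z1) + val (S z2)) /\
  (forall (a : R) (z1 z2 : Zp X Y p), val z2 = a *: val z1 ->
      val (S z2) = a *: val (S z1)).

Definition zopbound (R : realType) (X Y : normedModType R) (p : R)
    (S : zop X Y p) (c : R) :=
  forall z, znorm (S z) <= c * znorm z.

Definition zbounded (R : realType) (X Y : normedModType R) (p : R)
    (S : zop X Y p) := exists c : R, zopbound S c.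

Definition zcompact (R : realType) (X Y : normedModType R) (p : R)
    (S : zop X Y p) :=
  forall u : nat -> Zp X Y p, (exists M : R, forall n, znorm (u n) <= M) ->
    exists (phi : nat -> nat) (w : Zp X Y p),
      {homo phi : m n / (m < n)%N >-> (m < n)%N} /\
      (fun n => zdist (S (u (phi n))) w) @ \oo --> (0 : R).

Definition in_KZ (R : realType) (X Y : normedModType R) (p : R)
    (S : zop X Y p) := [/\ zlinear S, zbounded S & zcompact S].

Definition J0raw (R : realType) (X Y : normedModType R) (y : Y) : seqE X Y :=
  (y, fun _ => 0).
Definition Jraw (R : realType) (X Y : normedModType R) (k : nat) (x : X) :
  seqE X Y := (0, fun n => if n == k.-1 then x else 0).

(* P_0 S J_0 : Y -> Y and P_0 S J_k : X -> Y (k >= 1).  The vectors J_0 y,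
   J_k x always lie in Z_p; insub packages them as elements of Zp. *)
Definition P0SJ0 (R : realType) (X Y : normedModType R) (p : R)
    (S : zop X Y p) (y : Y) : Y :=
  oapp (fun z : Zp X Y p => (val (S z)).1) 0 (insub (J0raw X y)).
Definition P0SJ (R : realType) (X Y : normedModType R) (p : R)
    (S : zop X Y p) (k : nat) (x : X) : Y :=
  oapp (fun z : Zp X Y p => (val (S z)).1) 0 (insub (Jraw Y k x)).

Definition in_I (R : realType) (X Y : normedModType R) (p : R)
    (A : set nat) (S : zop X Y p) :=
  [/\ in_KZ S, in_A (P0SJ0 S) &
      forall k, A k -> in_A (P0SJ S k)].

Definition banach_alg_iso (R : realType) (X Y : normedModType R) (p : R)
    (I I' : set (zop X Y p)) (Phi Psi : zop X Y p -> zop X Y p) :=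
  (forall S, I S -> I' (Phi S)) /\
      (forall T, I' T -> I (Psi T)) /\
      (forall S, I S -> Psi (Phi S) = S) /\
      (forall T, I' T -> Phi (Psi T) = T) /\
      (forall S T U, I S -> I T -> I U ->
         (forall z, val (U z) = val (S z) + val (T z)) ->
         forall z, val (Phi U z) = val (Phi S z) + val (Phi T z)) /\
      (forall (a : R) S U, I S -> I U ->
         (forall z, val (U z) = a *: val (S z)) ->
         forall z, val (Phi U z) = a *: val (Phi S z)) /\
      (forall S T, I S -> I T -> Phi (S \o T) = Phi S \o Phi T) /\
      (exists C : R, forall S c, I S -> zopbound S c -> zopbound (Phi S) (C * c)) /\
      (exists C : R, forall T c, I' T -> zopbound T c -> zopbound (Psi T) (C * c)).

Definition banach_alg_isomorphic (R : realType) (X Y : normedModType R)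
    (p : R) (I I' : set (zop X Y p)) :=
  exists Phi Psi, banach_alg_iso I I' Phi Psi.

(* The map U : (y, x_1, x_2, x_3, ...) |-> (y, W (x_1, x_2), x_3, ...) is an
   isomorphism of Z_p onto itself, with inverse (y, x_1, x_2, ...) |->
   (y, V x_1, x_2, ...), and it fixes the Y-coordinate.  Conjugation
   S |-> U S U^-1 is therefore a Banach-algebra automorphism of K(Z_p) with
   P_0 (U S U^-1) J_k = P_0 S U^-1 J_k, where U^-1 J_1 = J_1 V_1 + J_2 V_2 and
   U^-1 J_k = J_(k+1) for k >= 2, while U J_1 = J_1 W(., 0), U J_2 = J_1 W(0, .)
   and U J_k = J_(k-1) for k >= 3.  Hence it maps I_[n+1] onto I_[n] and
   I_[n+1]^c onto I_[n]^c, and both statements follow by induction on n. *)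

From Pilot Require Import Defs.
From HB Require Import structures.
From mathcomp Require Import all_boot all_order all_algebra.
From mathcomp Require Import all_classical all_reals all_analysis.
From mathcomp Require Import lra zify.

Set Implicit Arguments. Unset Strict Implicit. Unset Printing Implicit Defensive.
Import Order.TTheory GRing.Theory Num.Theory.
Import numFieldNormedType.Exports.
Local Open Scope classical_set_scope.
Local Open Scope ring_scope.

Section BoundedLinear.
Variables (R : realType) (E F : normedModType R) (f : E -> F).
Hypothesis f_linear : is_linear f.

Let lf := f.
(* Local: globally, every function would become a candidate linear map for
   canonical-structure inference. *)
#[local] HB.instance Definition _ := GRing.isLinear.Build R E F *:%R lf f_linear.

Lemma is_linear0 : f 0 = 0.
Proof. exact: (linear0 lf). Qed.

Lemma is_linearD u v : f (u + v) = f u + f v.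
Proof. exact: (linearD lf). Qed.

Lemma is_linearZ (a : R) u : f (a *: u) = a *: f u.
Proof. exact: (linearZZ lf). Qed.

Lemma is_linear_bound : continuous f ->
  exists2 C : R, 0 < C & forall x, `|f x| <= C * `|x|.
Proof. by move=> /(linear_bounded_continuous lf)/linear_boundedP/pinfty_ex_gt0. Qed.

Lemma bdd_op_of_bound : (exists C : R, forall x, `|f x| <= C * `|x|) -> bdd_op f.
Proof.
move=> [C fC]; split => //; apply/(linear_bounded_continuous lf)/linear_boundedP.
exists C; split=> [|r Cr x]; first exact: num_real.
by apply: le_trans (fC x) _; apply: ler_wpM2r => //; exact: ltW.
Qed.

End BoundedLinear.

Section ApproximableOperators.
Variable R : realType.

Lemma bdd_op_comp (E1 E2 F : normedModType R) (T : E2 -> F) (B : E1 -> E2) :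
  bdd_op T -> bdd_op B -> bdd_op (T \o B).
Proof.
move=> [lT cT] [lB cB]; split=> [a u v|x] /=; first by rewrite lB lT.
exact: continuous_comp (cB x) (cT _).
Qed.

Lemma bdd_op_add (E F : normedModType R) (T1 T2 : E -> F) :
  bdd_op T1 -> bdd_op T2 -> bdd_op (fun x => T1 x + T2 x).
Proof.
move=> [l1 c1] [l2 c2]; split=> [a u v|x]; first by rewrite l1 l2 scalerDr addrACA.
exact: continuousD (c1 x) (c2 x).
Qed.

Lemma finite_rank_add (E F : normedModType R) (T1 T2 : E -> F) :
  finite_rank T1 -> finite_rank T2 -> finite_rank (fun x => T1 x + T2 x).
Proof.
move=> [n1 [e1 He1]] [n2 [e2 He2]].
exists (n1 + n2)%N, (fun i => match fintype.split i with inl j => e1 j | inr j => e2 j end).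
move=> x; have [c1 ->] := He1 x; have [c2 ->] := He2 x.
exists (fun i => match fintype.split i with inl j => c1 j | inr j => c2 j end).
by rewrite big_split_ord /=; congr (_ + _); apply: eq_bigr => i _;
  rewrite ?(unsplitK (inl i)) ?(unsplitK (inr i)).
Qed.

Lemma in_A_comp (E1 E2 F : normedModType R) (T : E2 -> F) (B : E1 -> E2) :
  in_A T -> bdd_op B -> in_A (T \o B).
Proof.
move=> [bT appT] bB; split=> [|eps eps0]; first exact: bdd_op_comp.
have [C C0 BC] := is_linear_bound bB.1 bB.2.
have [T0 [bT0 [rT0 T0T]]] := appT (eps / C) (divr_gt0 eps0 C0).
exists (T0 \o B); split; first exact: bdd_op_comp.
split=> [|x /=]; first by case: rT0 => n [e He]; exists n, e => x; exact: He.
apply: le_trans (T0T (B x)) (le_trans (ler_wpM2l _ (BC x)) _).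
  by rewrite divr_ge0 ?ltW.
by rewrite mulrA divfK ?gt_eqF.
Qed.

Lemma in_A_add (E F : normedModType R) (T1 T2 : E -> F) :
  in_A T1 -> in_A T2 -> in_A (fun x => T1 x + T2 x).
Proof.
move=> [b1 app1] [b2 app2]; split=> [|eps eps0]; first exact: bdd_op_add.
have eps2 : 0 < eps / 2 by rewrite divr_gt0.
have [F1 [bF1 [rF1 F1T]]] := app1 _ eps2.
have [F2 [bF2 [rF2 F2T]]] := app2 _ eps2.
exists (fun x => F1 x + F2 x); split; first exact: bdd_op_add.
split=> [|x]; first exact: finite_rank_add.
rewrite opprD addrACA (le_trans (ler_normD _ _)) //.
by rewrite [in leRHS](splitr eps) mulrDl lerD.
Qed.

Lemma eq_in_A (E F : normedModType R) (T T' : E -> F) :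
  T =1 T' -> in_A T -> in_A T'.
Proof. by move=> /funext ->. Qed.

End ApproximableOperators.

Lemma nneseriesS (R : realType) (f : nat -> \bar R) : (forall k, 0 <= f k)%E ->
  (\sum_(k <oo) f k = f 0%N + \sum_(k <oo) f k.+1)%E.
Proof.
move=> f0; rewrite (nneseries_recl (P := xpredT)) // -nneseries_addn //.
by under [in RHS]eq_eseriesr do rewrite -addn1.
Qed.

Lemma lee_head_tail (R : realType) (K a b : R) (s : \bar R) :
  1 <= K -> (0 <= s)%E -> a <= K * b -> (a%:E + s <= K%:E * (b%:E + s))%E.
Proof.
move=> K1 s0 ab; rewrite muleDr // -EFinM leeD ?lee_fin //.
exact: lee_pemull.
Qed.

Section LpSums.
Variables (R : realType) (p : R) (X Y : normedModType R).
Hypothesis p_gt1 : 1 < p.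

Let p_ge0 : 0 <= p. Proof. exact: ltW (lt_trans ltr01 p_gt1). Qed.

Lemma lpterm_ge0 (E : normedModType R) (x : E) : (0 <= (`|x| `^ p)%:E)%E.
Proof. by rewrite lee_fin powR_ge0. Qed.

Lemma lpsum_ge0 (d : seqE X Y) : (0 <= lpsum p d)%E.
Proof. by rewrite adde_ge0 ?lpterm_ge0 // nneseries_ge0 // => k _ _; exact: lpterm_ge0. Qed.

Lemma lpsum_cons1 (y : Y) (x : nat -> X) : lpsum p (y, x) =
  ((`|y| `^ p + `|x 0%N| `^ p)%:E + \sum_(k <oo) (`|x k.+1| `^ p)%:E)%E.
Proof. by rewrite /lpsum nneseriesS ?EFinD ?addeA // => k; exact: lpterm_ge0. Qed.

Lemma lpsum_cons2 (y : Y) (x : nat -> X) : lpsum p (y, x) =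
  ((`|y| `^ p + `|x 0%N| `^ p + `|x 1%N| `^ p)%:E
   + \sum_(k <oo) (`|x k.+2| `^ p)%:E)%E.
Proof.
rewrite lpsum_cons1 nneseriesS ?EFinD ?addeA // => k; exact: lpterm_ge0.
Qed.

Lemma powR_max_le (a b : R) :
  Num.max a b `^ p <= a `^ p + b `^ p.
Proof.
by rewrite maxEle; case: ifP => _; rewrite ?lerDl ?lerDr powR_ge0.
Qed.

Lemma ler_powRM (C a b : R) : 0 <= C -> 0 <= a -> 0 <= b -> a <= C * b ->
  a `^ p <= C `^ p * b `^ p.
Proof.
move=> C0 a0 b0 ab; rewrite -powRM //.
by apply: ge0_ler_powR; rewrite ?nnegrE ?mulr_ge0.
Qed.

Definition lpnorm (d : seqE X Y) : R := fine (lpsum p d) `^ p^-1.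

Definition lp_dominated (F : seqE X Y -> seqE X Y) :=
  exists2 K : R, 0 < K & forall d, (lpsum p (F d) <= K%:E * lpsum p d)%E.

Lemma lp_dominated_inZ F : lp_dominated F -> forall d, inZ p d -> inZ p (F d).
Proof.
move=> [K K0 FK] d; rewrite /inZ => dfin; apply: le_lt_trans (FK d) _.
by rewrite lte_mul_pinfty // lee_fin ltW.
Qed.

(* The last hypothesis is needed because [fine +oo = 0]. *)
Lemma lpnorm_le (d e : seqE X Y) (K : R) : 0 < K ->
  (lpsum p e <= K%:E * lpsum p d)%E -> (lpsum p d = +oo -> lpsum p e = +oo)%E ->
  lpnorm e <= K `^ p^-1 * lpnorm d.
Proof.
move=> K0 ed de; rewrite /lpnorm -powRM ?fine_ge0 ?lpsum_ge0 //; last exact: ltW.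
apply: ge0_ler_powR; rewrite ?invr_ge0 ?nnegrE ?mulr_ge0 ?fine_ge0 ?lpsum_ge0 ?(ltW K0) //.
have [dfin|] := boolP (lpsum p d < +oo)%E; last first.
  by rewrite -leNgt leye_eq => /eqP dinf; rewrite (de dinf) dinf mulr0.
have dfin' : lpsum p d \is a fin_num by rewrite ge0_fin_numE ?lpsum_ge0.
have efin : lpsum p e \is a fin_num.
  rewrite ge0_fin_numE ?lpsum_ge0 // (le_lt_trans ed) //.
  by rewrite lte_mul_pinfty // lee_fin ltW.
by rewrite -[K]/(fine K%:E) -fineM // fine_le // fin_numM.
Qed.

End LpSums.

Section LpIsomorphisms.
Variables (R : realType) (p : R) (X Y : normedModType R).
Hypothesis p_gt1 : 1 < p.

Record lp_iso := LpIso {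
  lp_fwd : seqE X Y -> seqE X Y;
  lp_bwd : seqE X Y -> seqE X Y;
  lp_fwdK : cancel lp_fwd lp_bwd;
  lp_bwdK : cancel lp_bwd lp_fwd;
  lp_fwdD : {morph lp_fwd : u v / u + v};
  lp_fwdZ : forall a : R, {morph lp_fwd : u / a *: u};
  lp_fwd_dominated : lp_dominated p lp_fwd;
  lp_bwd_dominated : lp_dominated p lp_bwd }.

Lemma lp_bwdD (e : lp_iso) : {morph lp_bwd e : u v / u + v}.
Proof. by move=> u v; apply: (can_inj (lp_fwdK e)); rewrite lp_fwdD !lp_bwdK. Qed.

Lemma lp_bwdZ (e : lp_iso) (a : R) : {morph lp_bwd e : u / a *: u}.
Proof. by move=> u; apply: (can_inj (lp_fwdK e)); rewrite lp_fwdZ !lp_bwdK. Qed.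

Definition lp_iso_inv (e : lp_iso) : lp_iso :=
  LpIso (lp_bwdK e) (lp_fwdK e) (lp_bwdD e) (lp_bwdZ e)
    (lp_bwd_dominated e) (lp_fwd_dominated e).

Lemma lp_fwdB (e : lp_iso) : {morph lp_fwd e : u v / u - v}.
Proof. by move=> u v; apply/eqP; rewrite eq_sym subr_eq -lp_fwdD subrK. Qed.

Lemma lpnorm_fwd (e : lp_iso) :
  exists2 C : R, 0 <= C & forall d, lpnorm p (lp_fwd e d) <= C * lpnorm p d.
Proof.
have [K K0 eK] := lp_fwd_dominated e.
exists (K `^ p^-1) => [|d]; first exact: powR_ge0.
apply: (lpnorm_le p_gt1) => // dinf; apply/eqP; rewrite -leye_eq leNgt; apply/negP.
move=> /(lp_dominated_inZ (lp_bwd_dominated e)).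
by rewrite /inZ lp_fwdK dinf ltxx.
Qed.

Definition lp_lift (e : lp_iso) (z : Defs.Zp X Y p) : Defs.Zp X Y p :=
  exist _ (lp_fwd e (val z)) (lp_dominated_inZ (lp_fwd_dominated e) (valP z)).

Lemma lp_liftK (e : lp_iso) : cancel (lp_lift e) (lp_lift (lp_iso_inv e)).
Proof. by move=> z; apply: val_inj; exact: lp_fwdK. Qed.

Lemma lp_liftVK (e : lp_iso) : cancel (lp_lift (lp_iso_inv e)) (lp_lift e).
Proof. by move=> z; apply: val_inj; exact: lp_bwdK. Qed.

Lemma lp_lift_invK (e : lp_iso) : lp_lift (lp_iso_inv (lp_iso_inv e)) = lp_lift e.
Proof. by apply/funext => z; apply: val_inj. Qed.

Definition lp_conj (e : lp_iso) (S : zop X Y p) : zop X Y p :=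
  lp_lift e \o S \o lp_lift (lp_iso_inv e).

Lemma lp_conjK (e : lp_iso) : cancel (lp_conj e) (lp_conj (lp_iso_inv e)).
Proof. by move=> S; apply/funext => z; rewrite /lp_conj /= lp_liftK lp_liftVK. Qed.

Lemma lp_conjVK (e : lp_iso) : cancel (lp_conj (lp_iso_inv e)) (lp_conj e).
Proof. by move=> S; apply/funext => z; rewrite /lp_conj /= lp_liftVK lp_liftK. Qed.

Lemma lp_conj_invK (e : lp_iso) : lp_conj (lp_iso_inv (lp_iso_inv e)) = lp_conj e.
Proof. by rewrite /lp_conj (lp_lift_invK e) (lp_lift_invK (lp_iso_inv e)). Qed.

Lemma lp_conj_comp (e : lp_iso) (S T : zop X Y p) :
  lp_conj e (S \o T) = lp_conj e S \o lp_conj e T.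
Proof. by apply/funext => z; rewrite /lp_conj /= lp_liftK. Qed.

Lemma lp_conjD (e : lp_iso) (S T U : zop X Y p) :
  (forall z, val (U z) = val (S z) + val (T z)) ->
  forall z, val (lp_conj e U z) = val (lp_conj e S z) + val (lp_conj e T z).
Proof. by move=> UST z; rewrite /lp_conj /= UST lp_fwdD. Qed.

Lemma lp_conjZ (e : lp_iso) (a : R) (S U : zop X Y p) :
  (forall z, val (U z) = a *: val (S z)) ->
  forall z, val (lp_conj e U z) = a *: val (lp_conj e S z).
Proof. by move=> US z; rewrite /lp_conj /= US lp_fwdZ. Qed.

Lemma lp_conj_zlinear (e : lp_iso) (S : zop X Y p) : zlinear S -> zlinear (lp_conj e S).
Proof.
move=> [SD SZ]; split=> [z1 z2 z3 z123|a z1 z2 z12]; rewrite /lp_conj /=.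
- by rewrite -lp_fwdD; congr (lp_fwd e); apply: SD; rewrite /= z123 lp_bwdD.
- by rewrite -lp_fwdZ; congr (lp_fwd e); apply: SZ; rewrite /= z12 lp_bwdZ.
Qed.

Lemma znormE (z : Defs.Zp X Y p) : znorm z = lpnorm p (val z).
Proof. by []. Qed.

Lemma zdistE (z w : Defs.Zp X Y p) : zdist z w = lpnorm p (val z - val w).
Proof. by []. Qed.

Lemma lp_conj_bound (e : lp_iso) :
  exists C : R, forall S c, zopbound S c -> zopbound (lp_conj e S) (C * c).
Proof.
have [C1 C10 fwdC] := lpnorm_fwd e.
have [C2 C20 bwdC] := lpnorm_fwd (lp_iso_inv e).
exists (C1 * C2) => S c Sc z.
have [c0|c_lt0] := leP 0 c; last first.
  have norm0 (w : Defs.Zp X Y p) : znorm w = 0.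
    apply/eqP; rewrite eq_le powR_ge0 andbT.
    by rewrite -(nmulr_rge0 _ c_lt0) (le_trans (powR_ge0 _ _) (Sc w)).
  by rewrite !norm0 mulr0.
set w := lp_lift (lp_iso_inv e) z.
have Sw := Sc w; rewrite !znormE in Sw.
have wz : lpnorm p (val w) <= C2 * lpnorm p (val z) := bwdC (val z).
rewrite znormE -!mulrA; apply: le_trans (fwdC (val (S w))) (ler_wpM2l C10 _).
by rewrite mulrCA; apply: le_trans Sw (ler_wpM2l c0 wz).
Qed.

Lemma lp_conj_compact (e : lp_iso) (S : zop X Y p) : zcompact S -> zcompact (lp_conj e S).
Proof.
have [C1 C10 fwdC] := lpnorm_fwd e.
have [C2 C20 bwdC] := lpnorm_fwd (lp_iso_inv e).
move=> Scpt u [M uM].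
have [|phi [w [phi_mono Sw]]] := Scpt (lp_lift (lp_iso_inv e) \o u).
  exists (C2 * M) => n; have := uM n; rewrite !znormE => unM.
  exact: le_trans (bwdC (val (u n))) (ler_wpM2l C20 unM).
exists phi, (lp_lift e w); split; first exact: phi_mono.
have dist_le n : zdist (lp_conj e S (u (phi n))) (lp_lift e w)
    <= C1 * zdist (S (lp_lift (lp_iso_inv e) (u (phi n)))) w.
  rewrite !zdistE -lp_fwdB; exact: fwdC.
have C1Sw : C1 * zdist (S (lp_lift (lp_iso_inv e) (u (phi n)))) w @[n --> \oo] --> 0.
  by rewrite -(mulr0 C1); exact: cvgM (cvg_cst C1) Sw.
apply: (squeeze_cvgr _ (cvg_cst 0) C1Sw).
by apply: nearW => n; rewrite powR_ge0 dist_le.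
Qed.

Lemma lp_conj_in_KZ (e : lp_iso) (S : zop X Y p) : in_KZ S -> in_KZ (lp_conj e S).
Proof.
have [C eC] := lp_conj_bound e.
case=> Slin [c Sc] Scpt; split; first exact: lp_conj_zlinear.
  by exists (C * c); exact: eC.
exact: lp_conj_compact.
Qed.

Lemma lp_conj_banach_alg_iso (e : lp_iso) (I I' : set (zop X Y p)) :
  (forall S, I S -> I' (lp_conj e S)) ->
  (forall T, I' T -> I (lp_conj (lp_iso_inv e) T)) ->
  banach_alg_iso I I' (lp_conj e) (lp_conj (lp_iso_inv e)).
Proof.
move=> II' I'I.
have [C eC] := lp_conj_bound e; have [C' eC'] := lp_conj_bound (lp_iso_inv e).
split; first exact: II'.
split; first exact: I'I.
split; first by move=> S _; exact: lp_conjK.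
split; first by move=> T _; exact: lp_conjVK.
split; first by move=> S T U _ _ _; exact: lp_conjD.
split; first by move=> a S U _ _; exact: lp_conjZ.
split; first by move=> S T _ _; exact: lp_conj_comp.
by split; [exists C => S c _; exact: eC | exists C' => T c _; exact: eC'].
Qed.

Lemma lp_conj_isomorphic (e : lp_iso) (I I' : set (zop X Y p)) :
  (forall S, I S -> I' (lp_conj e S)) ->
  (forall T, I' T -> I (lp_conj (lp_iso_inv e) T)) ->
  banach_alg_isomorphic I I' /\ banach_alg_isomorphic I' I.
Proof.
move=> II' I'I; split.
  by exists (lp_conj e), (lp_conj (lp_iso_inv e)); exact: lp_conj_banach_alg_iso.
exists (lp_conj (lp_iso_inv e)), (lp_conj (lp_iso_inv (lp_iso_inv e))).
by apply: lp_conj_banach_alg_iso => //; rewrite lp_conj_invK.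
Qed.

End LpIsomorphisms.

Section Coordinates.
Variables (R : realType) (p : R) (X Y : normedModType R).
Hypothesis p_gt1 : 1 < p.

Let p_neq0 : p != 0. Proof. by rewrite gt_eqF // (lt_trans ltr01 p_gt1). Qed.

Lemma Jraw_inZ k (x : X) : inZ p (Jraw Y k x).
Proof.
rewrite /inZ /lpsum /= normr0 powR0 // add0e (@nneseriesD1 R _ k.-1 xpredT) //= eqxx.
rewrite eseries0 ?adde0 ?ltey //.
by move=> i _ /negbTE ->; rewrite normr0 powR0.
Qed.

Lemma J0raw_inZ (y : Y) : inZ p (J0raw X y).
Proof.
by rewrite /inZ /lpsum /= eseries0 ?adde0 ?ltey // => i _ _; rewrite normr0 powR0.
Qed.

Definition Jz k (x : X) : Defs.Zp X Y p := exist _ (Jraw Y k x) (Jraw_inZ k x).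
Definition J0z (y : Y) : Defs.Zp X Y p := exist _ (J0raw X y) (J0raw_inZ y).

Lemma P0SJE (S : zop X Y p) k x : P0SJ S k x = (val (S (Jz k x))).1.
Proof. by rewrite /P0SJ (insubT _ (Jraw_inZ k x)). Qed.

Lemma P0SJ0E (S : zop X Y p) y : P0SJ0 S y = (val (S (J0z y))).1.
Proof. by rewrite /P0SJ0 (insubT _ (J0raw_inZ y)). Qed.

Variable e : lp_iso p X Y.
Hypothesis e_fst : forall d, (lp_fwd e d).1 = d.1.

Lemma P0SJ0_lp_conj (S : zop X Y p) :
  (forall y, lp_bwd e (J0raw X y) = J0raw X y) -> P0SJ0 (lp_conj e S) = P0SJ0 S.
Proof.
move=> eJ0; apply/funext => y; rewrite !P0SJ0E /lp_conj /= e_fst.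
by congr (val (S _)).1; apply: val_inj; exact: eJ0.
Qed.

Lemma P0SJ_lp_conj (S : zop X Y p) k x k' x' :
  lp_bwd e (Jraw Y k x) = Jraw Y k' x' -> P0SJ (lp_conj e S) k x = P0SJ S k' x'.
Proof.
move=> eJ; rewrite !P0SJE /lp_conj /= e_fst.
by congr (val (S _)).1; apply: val_inj; exact: eJ.
Qed.

Lemma P0SJ_lp_conjD (S : zop X Y p) k x k1 x1 k2 x2 : zlinear S ->
  lp_bwd e (Jraw Y k x) = Jraw Y k1 x1 + Jraw Y k2 x2 ->
  P0SJ (lp_conj e S) k x = P0SJ S k1 x1 + P0SJ S k2 x2.
Proof.
move=> [SD _] eJ; rewrite !P0SJE /lp_conj /= e_fst.
by rewrite (SD (Jz k1 x1) (Jz k2 x2)).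
Qed.

End Coordinates.

Section ProductSpaces.
Context {R : realType} {F1 F2 : normedModType R}.

Lemma bdd_op_fst : bdd_op (@fst F1 F2).
Proof.
apply: bdd_op_of_bound => //; exists 1 => x.
by rewrite mul1r prod_normE le_max lexx.
Qed.

Lemma bdd_op_snd : bdd_op (@snd F1 F2).
Proof.
apply: bdd_op_of_bound => //; exists 1 => x.
by rewrite mul1r prod_normE le_max lexx orbT.
Qed.

Lemma bdd_op_pairl : bdd_op (fun x : F1 => (x, 0 : F2)).
Proof.
apply: bdd_op_of_bound => [a u v|].
  by apply: injective_projections; rewrite /= ?scaler0 ?addr0.
by exists 1 => x; rewrite mul1r prod_normE /= normr0 ge_max lexx normr_ge0.
Qed.

Lemma bdd_op_pairr : bdd_op (fun x : F2 => (0 : F1, x)).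
Proof.
apply: bdd_op_of_bound => [a u v|].
  by apply: injective_projections; rewrite /= ?scaler0 ?addr0.
by exists 1 => x; rewrite mul1r prod_normE /= normr0 ge_max lexx normr_ge0.
Qed.

End ProductSpaces.

Definition merged12 (A A' : set nat) :=
  [/\ ~ A 0%N, ~ A' 0%N, (A 1%N <-> A 2%N), (A' 1%N <-> A 1%N)
    & forall k, (1 < k)%N -> (A' k <-> A k.+1)].

Section MergeCoordinates.
Variables (R : realType) (p : R) (X Y : normedModType R).
Variables (V : X -> (X * X)%type) (W : (X * X)%type -> X).
Hypotheses (V_linear : is_linear V) (V_cont : continuous V) (W_cont : continuous W).
Hypotheses (VK : cancel V W) (WK : cancel W V).
Hypothesis p_gt1 : 1 < p.

Lemma W_linear : is_linear W.
Proof. by move=> a u v; apply: (can_inj VK); rewrite V_linear !WK. Qed.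

Definition merge12 (z : seqE X Y) : seqE X Y :=
  (z.1, fun n => if n is n'.+1 then z.2 n'.+2 else W (z.2 0%N, z.2 1%N)).

Definition split12 (z : seqE X Y) : seqE X Y :=
  (z.1, fun n => match n with
                 | 0%N => (V (z.2 0%N)).1
                 | 1%N => (V (z.2 0%N)).2
                 | n'.+2 => z.2 n'.+1
                 end).

Lemma merge12K : cancel merge12 split12.
Proof. by case=> y x; congr (_, _); apply/funext => -[|[|n]] //=; rewrite WK. Qed.

Lemma split12K : cancel split12 merge12.
Proof.
by case=> y x; congr (_, _); apply/funext => -[|n] //=; rewrite -surjective_pairing VK.
Qed.

Lemma merge12D : {morph merge12 : u v / u + v}.
Proof.
move=> [y x] [y' x']; congr (_, _); rewrite /= !addrfctE.
by apply/funext => -[|n] //=; rewrite -(is_linearD W_linear).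
Qed.

Lemma merge12Z (a : R) : {morph merge12 : u / a *: u}.
Proof.
move=> [y x]; congr (_, _); rewrite /= !scalrfctE.
by apply/funext => -[|n] //=; rewrite -(is_linearZ W_linear).
Qed.

Lemma merge12_dominated : lp_dominated p merge12.
Proof.
have [C C0 WC] := is_linear_bound W_linear W_cont.
have Cp0 := powR_ge0 C p.
exists (1 + C `^ p) => [|[y x]]; first by rewrite (lt_le_trans ltr01) // lerDl.
rewrite /merge12 /= lpsum_cons1 lpsum_cons2 /=.
apply: lee_head_tail; first by rewrite lerDl.
  by apply: nneseries_ge0 => k _ _; exact: lpterm_ge0.
have Wx : `|W (x 0%N, x 1%N)| `^ p <= C `^ p * (`|x 0%N| `^ p + `|x 1%N| `^ p).
  apply: le_trans (ler_powRM p_gt1 (ltW C0) _ _ (WC _)) _; rewrite ?normr_ge0 //.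
  by rewrite prod_normE ler_wpM2l // powR_max_le.
have := powR_ge0 `|y| p; have := powR_ge0 `|x 0%N| p; have := powR_ge0 `|x 1%N| p.
nra.
Qed.

Lemma split12_dominated : lp_dominated p split12.
Proof.
have [C C0 VC] := is_linear_bound V_linear V_cont.
have Cp0 := powR_ge0 C p.
have Vi (x : X) : `|(V x).1| `^ p <= C `^ p * `|x| `^ p /\
                  `|(V x).2| `^ p <= C `^ p * `|x| `^ p.
  have := VC x; rewrite prod_normE ge_max => /andP[V1 V2].
  by split; apply: (ler_powRM p_gt1 (ltW C0)); rewrite ?normr_ge0.
exists (1 + C `^ p + C `^ p) => [|[y x]].
  by rewrite (lt_le_trans ltr01) // -addrA lerDl addr_ge0.
rewrite /split12 /= lpsum_cons2 lpsum_cons1 /=.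
apply: lee_head_tail; first by rewrite -addrA lerDl addr_ge0.
  by apply: nneseries_ge0 => k _ _; exact: lpterm_ge0.
have [V1 V2] := Vi (x 0%N).
have := powR_ge0 `|y| p; have := powR_ge0 `|x 0%N| p.
nra.
Qed.

Definition merge12_iso : lp_iso p X Y :=
  LpIso merge12K split12K merge12D merge12Z merge12_dominated split12_dominated.

Lemma split12_J0 (y : Y) : split12 (J0raw X y) = J0raw X y.
Proof.
congr (_, _); apply/funext => -[|[|n]] //=; by rewrite (is_linear0 V_linear).
Qed.

Lemma merge12_J0 (y : Y) : merge12 (J0raw X y) = J0raw X y.
Proof.
congr (_, _); apply/funext => -[|n] //=; exact: (is_linear0 W_linear).
Qed.

Lemma split12_J1 (x : X) :
  split12 (Jraw Y 1 x) = Jraw Y 1 (V x).1 + Jraw Y 2 (V x).2.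
Proof.
congr (_, _); first by rewrite /= addr0.
by rewrite /= addrfctE; apply/funext => -[|[|n]] /=; rewrite ?addr0 ?add0r.
Qed.

Lemma split12_J k (x : X) : (1 < k)%N -> split12 (Jraw Y k x) = Jraw Y k.+1 x.
Proof.
case: k => [|[|k]] // _; congr (_, _); apply/funext => -[|[|n]] //=;
  by rewrite (is_linear0 V_linear).
Qed.

Lemma merge12_J1 (x : X) : merge12 (Jraw Y 1 x) = Jraw Y 1 (W (x, 0)).
Proof. by congr (_, _); apply/funext => -[|n]. Qed.

Lemma merge12_J2 (x : X) : merge12 (Jraw Y 2 x) = Jraw Y 1 (W (0, x)).
Proof. by congr (_, _); apply/funext => -[|n]. Qed.

Lemma merge12_J k (x : X) : (2 < k)%N -> merge12 (Jraw Y k x) = Jraw Y k.-1 x.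
Proof.
case: k => [|[|[|k]]] // _; congr (_, _); apply/funext => -[|n] //=.
exact: (is_linear0 W_linear).
Qed.

Lemma merge12_fst d : (lp_fwd merge12_iso d).1 = d.1.
Proof. by []. Qed.

Lemma split12_fst d : (lp_fwd (lp_iso_inv merge12_iso) d).1 = d.1.
Proof. by []. Qed.

Lemma in_I_merge12 (A A' : set nat) (S : zop X Y p) :
  merged12 A A' -> in_I A S -> in_I A' (lp_conj merge12_iso S).
Proof.
case=> _ nA'0 A12 A'1 A'k [KS AS0 AS]; split; first exact: lp_conj_in_KZ.
  by rewrite (P0SJ0_lp_conj p_gt1 merge12_fst) //; exact: split12_J0.
have V_bdd : bdd_op V := conj V_linear V_cont.
case=> [/nA'0 //|[|k] A'k'].
- have A1 := A'1.1 A'k'; have A2 := A12.1 A1.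
  apply: (eq_in_A _ (in_A_add (in_A_comp (AS _ A1) (bdd_op_comp bdd_op_fst V_bdd))
                              (in_A_comp (AS _ A2) (bdd_op_comp bdd_op_snd V_bdd)))).
  have [S_lin _ _] := KS.
  by move=> x; rewrite (P0SJ_lp_conjD p_gt1 merge12_fst S_lin (split12_J1 x)).
- apply: (eq_in_A _ (AS _ ((A'k k.+2 isT).1 A'k'))) => x.
  by rewrite (P0SJ_lp_conj p_gt1 merge12_fst S (@split12_J k.+2 x isT)).
Qed.

Lemma in_I_split12 (A A' : set nat) (T : zop X Y p) :
  merged12 A A' -> in_I A' T -> in_I A (lp_conj (lp_iso_inv merge12_iso) T).
Proof.
case=> nA0 _ A12 A'1 A'k [KT AT0 AT]; split; first exact: lp_conj_in_KZ.
  by rewrite (P0SJ0_lp_conj p_gt1 split12_fst) //; exact: merge12_J0.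
have W_bdd : bdd_op W := conj W_linear W_cont.
case=> [/nA0 //|[|[|k]] Ak].
- apply: (eq_in_A _ (in_A_comp (AT _ (A'1.2 Ak)) (bdd_op_comp W_bdd bdd_op_pairl))).
  by move=> x; rewrite (P0SJ_lp_conj p_gt1 split12_fst T (merge12_J1 x)).
- apply: (eq_in_A _ (in_A_comp (AT _ (A'1.2 (A12.2 Ak)))
                                (bdd_op_comp W_bdd bdd_op_pairr))).
  by move=> x; rewrite (P0SJ_lp_conj p_gt1 split12_fst T (merge12_J2 x)).
- apply: (eq_in_A _ (AT _ ((A'k k.+2 isT).2 Ak))) => x.
  by rewrite (P0SJ_lp_conj p_gt1 split12_fst T (@merge12_J k.+3 x isT)).
Qed.

Lemma merged12_isomorphic (A A' : set nat) : merged12 A A' ->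
  banach_alg_isomorphic (in_I (X := X) (Y := Y) (p := p) A) (in_I A') /\
  banach_alg_isomorphic (in_I (X := X) (Y := Y) (p := p) A') (in_I A).
Proof.
move=> AA'; apply: (lp_conj_isomorphic p_gt1 (e := merge12_iso)) => S.
  exact: in_I_merge12.
exact: in_I_split12.
Qed.

End MergeCoordinates.

Section IsomorphismChain.
Variables (R : realType) (p : R) (X Y : normedModType R).
Implicit Types I : set (zop X Y p).

Lemma banach_alg_isomorphic_refl I : banach_alg_isomorphic I I.
Proof.
exists id, id.
do 4 (split; first by []).
split; first by move=> S T U _ _ _.
split; first by move=> a S U _ _.
split; first by [].
by split; exists 1 => S c _; rewrite mul1r.
Qed.

Lemma banach_alg_isomorphic_trans I1 I2 I3 :
  banach_alg_isomorphic I1 I2 -> banach_alg_isomorphic I2 I3 ->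
  banach_alg_isomorphic I1 I3.
Proof.
move=> [P1 [Q1 [PI1 [QI1 [QP1 [PQ1 [PD1 [PZ1 [PM1 [[C1 PC1] [D1 QC1]]]]]]]]]]].
move=> [P2 [Q2 [PI2 [QI2 [QP2 [PQ2 [PD2 [PZ2 [PM2 [[C2 PC2] [D2 QC2]]]]]]]]]]].
exists (P2 \o P1), (Q1 \o Q2).
split; first by move=> S /PI1/PI2.
split; first by move=> T /QI2/QI1.
split; first by move=> S IS /=; rewrite QP2 ?QP1 //; exact: PI1.
split; first by move=> T IT /=; rewrite PQ1 ?PQ2 //; exact: QI2.
split.
  move=> S T U IS IT IU UST.
  by apply: (PD2 _ _ _ _ _ _ (PD1 _ _ _ IS IT IU UST)); apply: PI1.
split.
  by move=> a S U IS IU US; apply: (PZ2 _ _ _ _ _ (PZ1 _ _ _ IS IU US)); apply: PI1.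
split; first by move=> S T IS IT /=; rewrite PM1 // PM2 //; apply: PI1.
split.
  exists (C2 * C1) => S c IS Sc /=.
  by rewrite -mulrA; apply: PC2; [apply: PI1 | apply: PC1].
exists (D1 * D2) => T c IT Tc /=.
by rewrite -mulrA; apply: QC1; [apply: QI2 | apply: QC2].
Qed.

Lemma banach_alg_isomorphic_chain (I : nat -> set (zop X Y p)) :
  (forall n, (0 < n)%N ->
     banach_alg_isomorphic (I n.+1) (I n) /\ banach_alg_isomorphic (I n) (I n.+1)) ->
  forall r s, (0 < r)%N -> (0 < s)%N -> banach_alg_isomorphic (I r) (I s).
Proof.
move=> step.
have to1 n :
    banach_alg_isomorphic (I n.+1) (I 1%N) /\ banach_alg_isomorphic (I 1%N) (I n.+1).
  elim: n => [|n [n_1 one_n]]; first by split; exact: banach_alg_isomorphic_refl.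
  have [Sn_n n_Sn] := step n.+1 isT.
  split; first exact: banach_alg_isomorphic_trans Sn_n n_1.
  exact: banach_alg_isomorphic_trans one_n n_Sn.
by move=> [|r] [|s] // _ _; exact: banach_alg_isomorphic_trans (to1 r).1 (to1 s).2.
Qed.

End IsomorphismChain.

Theorem lemma2p3 (R : realType) (p : R) (X Y : completeNormedModType R) :
  1 < p ->
  approx_prop X ->
  (forall T : X -> Y, in_A T -> in_K T) ->
  (exists T : X -> Y, in_K T /\ ~ in_A T) ->
  (exists (V : X -> (X * X)%type) (W : (X * X)%type -> X),
      is_linear V /\ continuous V /\ continuous W /\ cancel V W /\ cancel W V) ->
  forall r s : nat, (0 < r)%N -> (0 < s)%N ->
    banach_alg_isomorphic (p := p)
      (in_I (X := X) (Y := Y) (p := p) [set k | (1 <= k <= r)%N])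
      (in_I (X := X) (Y := Y) (p := p) [set k | (1 <= k <= s)%N]) /\
    banach_alg_isomorphic (p := p)
      (in_I (X := X) (Y := Y) (p := p) [set k | (r < k)%N])
      (in_I (X := X) (Y := Y) (p := p) [set k | (s < k)%N]).
Proof.
move=> p_gt1 _ _ _ [V [W [V_linear [V_cont [W_cont [VK WK]]]]]] r s r_gt0 s_gt0.
have merged_iso := merged12_isomorphic Y V_linear V_cont W_cont VK WK p_gt1.
split.
- apply: (banach_alg_isomorphic_chain
    (I := fun n => in_I (X := X) (Y := Y) (p := p) [set k | (1 <= k <= n)%N])) => // n n_gt0.
  by apply: merged_iso; split=> [||||k] /=; lia.
- apply: (banach_alg_isomorphic_chain
    (I := fun n => in_I (X := X) (Y := Y) (p := p) [set k | (n < k)%N])) => // n n_gt0.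
  by apply: merged_iso; split=> [||||k] /=; lia.
Qed.
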